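(* Let $\mathcal{H}=\mathbb{C}^2$ and let $\mathcal{L}=(\tilde H,\Gamma)$ be a minimally degenerate dephasing Lindbladian on $\mathcal{B}(\mathcal{H})$. Then there exist a non-degenerate, traceless self-adjoint operator $H$ on $\mathbb{C}^2$ and a real number $\gamma\geq 0$ such that $$\mathcal{L}=\mathcal{L}_0+\frac{\gamma}{2}\mathcal{D},\qquad \mathcal{L}_0\rho=-i[H,\rho],\qquad \mathcal{D}\rho=-[\sqrt{H},[\sqrt{H},\rho]],$$ where $\sqrt{H}:=\operatorname{sgn}(H)\sqrt{|H|}$ (functional calculus). Moreover, if $\mathcal{L}=\mathcal{L}_s$ depends smoothly on a real parameter $s$ (i.e. $\tilde H_s$ and the $\Gamma_{\alpha,s}$ are smooth in $s$), then $H_s$ and $\gamma_s$ in this representation depend smoothly on $s$ as well.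
   Context: For a finite-dimensional Hilbert space $\mathcal{H}$, a Lindbladian $\mathcal{L}=(\tilde H,\Gamma)$ is the super-operator on $\mathcal{B}(\mathcal{H})$ given by $\mathcal{L}\rho=-i[\tilde H,\rho]+\sum_{\alpha\in I}\big(\Gamma_\alpha\rho\Gamma_\alpha^*-\tfrac12(\Gamma_\alpha^*\Gamma_\alpha\rho+\rho\Gamma_\alpha^*\Gamma_\alpha)\big)$, where $\tilde H=\tilde H^*$, $I$ is a finite index set and $\Gamma_\alpha$ are operators on $\mathcal{H}$. It is called dephasing if $\Gamma_\alpha=f_\alpha(\tilde H)$ for bounded Borel functions $f_\alpha$. A dephasing Lindbladian on an $n$-dimensional space has a kernel of dimension at least $n$; it is called minimally degenerate if each of its eigenvalues is minimally degenerate, i.e. the kernel has dimension exactly $n$ and every nonzero eigenvalue of $\mathcal{L}$ is simple. *)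

From HB Require Import structures.
From mathcomp Require Import all_boot all_order all_algebra.
From mathcomp Require Import all_classical all_reals all_analysis.
From mathcomp.real_closed Require Import complex.

Set Implicit Arguments.
Unset Strict Implicit.
Unset Printing Implicit Defensive.

Import Order.TTheory GRing.Theory Num.Theory.
Local Open Scope ring_scope.

Section LindbladDefs.
Variable R : realType.
Local Notation C := R[i].

Definition ofR (x : R) : C := (x%:C)%C.

Definition adjmx n (A : 'M[C]_n) : 'M[C]_n := (map_mx Num.conj A)^T.

Definition hermitian n (A : 'M[C]_n) : Prop := adjmx A = A.

Definition unitary n (U : 'M[C]_n) : Prop := U *m adjmx U = 1%:M.

Definition fcalc n (A : 'M[C]_n) (f : R -> C) (B : 'M[C]_n) : Prop :=
  exists (U : 'M[C]_n) (d : 'rV[R]_n),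
    [/\ unitary U,
        A = U *m diag_mx (map_mx ofR d) *m adjmx U &
        B = U *m diag_mx (\row_j f (d 0 j)) *m adjmx U].

Definition commmx n (A B : 'M[C]_n) : 'M[C]_n := A *m B - B *m A.

Definition lindblad n (I : finType) (Ht : 'M[C]_n) (G : I -> 'M[C]_n)
    (rho : 'M[C]_n) : 'M[C]_n :=
  - (Complex 0 1) *: commmx Ht rho
  + \sum_(a : I) (G a *m rho *m adjmx (G a)
                  - 2^-1 *: (adjmx (G a) *m G a *m rho + rho *m (adjmx (G a) *m G a))).

Definition dephasing n (I : finType) (Ht : 'M[C]_n) (G : I -> 'M[C]_n) : Prop :=
  hermitian Ht /\ forall a : I, exists f : R -> C, fcalc Ht f (G a).

(* Matrix of a super-operator on B(C^n) = 'M_n (acting on row vectors mxvec rho). *)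
Definition supermx n (L : 'M[C]_n -> 'M[C]_n) : 'M[C]_(n * n) := lin_mx L.

Definition min_degenerate n (L : 'M[C]_n -> 'M[C]_n) : Prop :=
  \rank (kermx (supermx L)) = n /\
  forall a : C, a != 0 -> eigenvalue (supermx L) a ->
    \rank (eigenspace (supermx L) a) = 1%N.

Definition nondegenerate n (A : 'M[C]_n) : Prop :=
  forall a : C, eigenvalue A a -> \rank (eigenspace A a) = 1%N.

Definition sgnsqrt (x : R) : R := Num.sg x * Num.sqrt `|x|.

Definition dephasing_normal_form n (L : 'M[C]_n -> 'M[C]_n)
    (H : 'M[C]_n) (gamma : R) : Prop :=
  [/\ hermitian H, nondegenerate H, \tr H = 0, 0 <= gamma &
      exists sqrtH : 'M[C]_n,
        fcalc H (fun x => ofR (sgnsqrt x)) sqrtH /\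
        forall rho : 'M[C]_n,
          L rho = - (Complex 0 1) *: commmx H rho
                  + ofR (gamma / 2) *: (- commmx sqrtH (commmx sqrtH rho))].

Definition smoothR (f : R -> R) : Prop :=
  forall (k : nat) (x : R), derivable (derive1n k f) x 1.

Definition smoothM m n (M : R -> 'M[C]_(m, n)) : Prop :=
  forall i j, smoothR (fun s => complex.Re (M s i j)) /\ smoothR (fun s => complex.Im (M s i j)).

End LindbladDefs.

From Pilot Require Import Defs.
From HB Require Import structures.
From mathcomp Require Import all_boot all_order all_algebra.
From mathcomp Require Import all_classical all_reals all_analysis.
From mathcomp.real_closed Require Import complex.
From mathcomp Require Import ring.
Import Order.TTheory GRing.Theory Num.Theory.
Local Open Scope ring_scope.

(* In dimension two every function of the self-adjoint [Ht] is affine in its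
   traceless part [Q = Ht - (tr Ht / 2) 1], so each jump operator is
   [alpha_a + beta_a Q] and the Lindbladian collapses to
   [rho |-> - i c [Q, rho] - (mu / 2) [Q, [Q, rho]]] with
   [c = 1 - sum_a Im (beta_a conj alpha_a)] and [mu = sum_a |beta_a|^2].
   Minimal degeneracy forces [Q <> 0] (otherwise the Lindbladian vanishes) and
   [c <> 0] (otherwise it is a multiple of the double commutator, whose nonzero
   eigenvalue is doubly degenerate).  Then [H = c Q]; if [Q] has eigenvalues
   [r, -r], then [sqrt H] is a multiple of [Q] and the dissipative part is
   matched by [gamma = mu |r| / |c|].  Both are built from [c], [mu] and
   [tr (Q^2) = 2 r^2] by rational operations and a square root of a positive
   quantity, hence depend smoothly on the data. *)

Set Implicit Arguments.
Unset Strict Implicit.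
Unset Printing Implicit Defensive.

Lemma ord2_cases (i : 'I_2) : i = ord0 \/ i = ord_max.
Proof. by case: i => [[|[|//]]] Hi; [left|right]; apply: val_inj. Qed.

Lemma sum_ord2 (V : nmodType) (F : 'I_2 -> V) : \sum_(i < 2) F i = F ord0 + F ord_max.
Proof. by rewrite big_ord_recr big_ord1; congr (F _ + F _); apply: val_inj. Qed.

Section Unitary.
Variable R : realType.
Local Notation C := R[i].
Local Notation ofR := (@ofR R).

Lemma ofR_inj : injective ofR.
Proof. by move=> x y []. Qed.

Lemma ofR_eq0 (x : R) : (ofR x == 0) = (x == 0).
Proof. by rewrite -(inj_eq ofR_inj) /ofR rmorph0. Qed.

Lemma conj_ofR (x : R) : Num.conj (ofR x) = ofR x.
Proof. by rewrite /ofR -[Num.conj _]/(conjc _) conjc_real. Qed.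

Lemma adjmxE n (A : 'M[C]_n) i j : adjmx A i j = Num.conj (A j i).
Proof. by rewrite !mxE. Qed.

Lemma adjmxK n (A : 'M[C]_n) : adjmx (adjmx A) = A.
Proof. by apply/matrixP => i j; rewrite !adjmxE conjCK. Qed.

Lemma adjmxZ_ofR n (A : 'M[C]_n) (x : R) : adjmx (ofR x *: A) = ofR x *: adjmx A.
Proof. by apply/matrixP => i j; rewrite adjmxE !mxE rmorphM /= conj_ofR. Qed.

Lemma hermitian_conj n (A : 'M[C]_n) i j : Defs.hermitian A -> Num.conj (A i j) = A j i.
Proof. by move=> hA; rewrite -[in RHS]hA adjmxE. Qed.

Lemma unitary_adj_mul n (U : 'M[C]_n) : unitary U -> adjmx U *m U = 1%:M.
Proof. exact: mulmx1C. Qed.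

Definition uconj n (U X : 'M[C]_n) : 'M[C]_n := U *m X *m adjmx U.

Section UnitaryConjugation.
Variables (n : nat) (U : 'M[C]_n).

Lemma uconjD X Y : uconj U (X + Y) = uconj U X + uconj U Y.
Proof. by rewrite /uconj mulmxDr mulmxDl. Qed.

Lemma uconjB X Y : uconj U (X - Y) = uconj U X - uconj U Y.
Proof. by rewrite /uconj mulmxBr mulmxBl. Qed.

Lemma uconjZ a X : uconj U (a *: X) = a *: uconj U X.
Proof. by rewrite /uconj -scalemxAr -scalemxAl. Qed.

Hypothesis hU : unitary U.

Lemma uconj_scalar a : uconj U a%:M = a%:M.
Proof. by rewrite /uconj mul_mx_scalar -scalemxAl hU scale_scalar_mx mulr1. Qed.

Lemma uconjM X Y : uconj U (X *m Y) = uconj U X *m uconj U Y.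
Proof.
rewrite /uconj !mulmxA; congr (_ *m _).
by rewrite -[U *m X *m adjmx U *m U]mulmxA unitary_adj_mul // mulmx1.
Qed.

Lemma uconj_commmx X Y : uconj U (commmx X Y) = commmx (uconj U X) (uconj U Y).
Proof. by rewrite /commmx uconjB !uconjM. Qed.

Lemma mxtrace_uconj X : \tr (uconj U X) = \tr X.
Proof. by rewrite /uconj mxtrace_mulC mulmxA unitary_adj_mul // mul1mx. Qed.

Lemma uconjK X : uconj (adjmx U) (uconj U X) = X.
Proof.
by rewrite /uconj adjmxK !mulmxA unitary_adj_mul // mul1mx -mulmxA unitary_adj_mul // mulmx1.
Qed.

Lemma uconjVK X : uconj U (uconj (adjmx U) X) = X.
Proof. by rewrite /uconj adjmxK !mulmxA hU mul1mx -mulmxA hU mulmx1. Qed.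

Lemma mxrank_uconj X : \rank (uconj U X) = \rank X.
Proof.
have rank_le V Y : (\rank (uconj V Y) <= \rank Y)%N.
  by rewrite /uconj (leq_trans (mxrankM_maxl _ _)) ?mxrankM_maxr.
by apply/eqP; rewrite eqn_leq rank_le -{1}(uconjK X) rank_le.
Qed.

End UnitaryConjugation.

Lemma hermitian_spectral n (A : 'M[C]_n) : Defs.hermitian A ->
  exists (U : 'M[C]_n) (d : 'rV[R]_n), unitary U /\ A = uconj U (diag_mx (map_mx ofR d)).
Proof.
move=> hA.
have hs : A \is hermsymmx.
  by apply/is_hermitianmxP; rewrite expr0 scale1r -{1}hA /adjmx map_trmx.
have hP := spectral_unitarymx A.
have /orthomx_spectralP hAe := hermitian_normalmx hs.
have hreal := hermitian_spectral_diag_real hs.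
have hPa : map_mx Num.conj ((spectralmx A)^T) = adjmx (spectralmx A) by rewrite /adjmx map_trmx.
exists (adjmx (spectralmx A)), (map_mx (@complex.Re R) (spectral_diag A)); split.
  rewrite /unitary adjmxK; apply: mulmx1C.
  by move/unitarymxP: hP; rewrite /adjmx map_trmx.
have -> : map_mx ofR (map_mx (@complex.Re R) (spectral_diag A)) = spectral_diag A.
  apply/matrixP => i j; rewrite !mxE /ofR RRe_real //.
  by move/mxOverP: hreal; apply.
by rewrite [LHS]hAe /uconj adjmxK -hPa -(invmx_unitary hP).
Qed.

End Unitary.

Section TracelessPart.
Variable R : realType.
Local Notation C := R[i].
Local Notation ofR := (@ofR R).

Definition traceless (A : 'M[C]_2) : 'M[C]_2 := A - (\tr A / 2%:R)%:M.

Lemma mxtrace2 (A : 'M[C]_2) : \tr A = A ord0 ord0 + A ord_max ord_max.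
Proof. by rewrite /mxtrace sum_ord2. Qed.

Lemma mxtrace_traceless (A : 'M[C]_2) : \tr (traceless A) = 0.
Proof.
by rewrite /traceless linearB /= mxtrace_scalar -[_ / _ *+ 2]mulr_natr divfK ?subrr ?pnatr_eq0.
Qed.

Lemma hermitian_traceless (A : 'M[C]_2) : Defs.hermitian A -> Defs.hermitian (traceless A).
Proof.
move=> hA; apply/matrixP => i j; rewrite adjmxE !mxE mxtrace2.
rewrite !(rmorphB, rmorphMn, rmorphM, rmorphD, fmorphV, rmorph1) /= !hermitian_conj //.
by case: (ord2_cases i) => ->; case: (ord2_cases j) => ->.
Qed.

Lemma commmx_traceless (A B : 'M[C]_2) : commmx A B = commmx (traceless A) B.
Proof.
by rewrite /commmx /traceless mulmxBl mulmxBr mul_scalar_mx mul_mx_scalar opprB addrA subrK.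
Qed.

(* A function on the (at most two) eigenvalues of [A] agrees there with an
   affine function. *)
Lemma fcalc_affine (A B : 'M[C]_2) f : fcalc A f B ->
  exists al be, B = al%:M + be *: traceless A.
Proof.
case=> U [d [hU hA hB]].
have {}hA : A = uconj U (diag_mx (map_mx ofR d)) := hA.
have {}hB : B = uconj U (diag_mx (\row_j f (d 0 j))) := hB.
set d1 := d 0 ord0; set d2 := d 0 ord_max.
have trA : \tr A = ofR d1 + ofR d2.
  by rewrite hA mxtrace_uconj // mxtrace_diag sum_ord2 !mxE.
have hQ : traceless A = uconj U (diag_mx (map_mx ofR d) - (\tr A / 2%:R)%:M).
  by rewrite uconjB (uconj_scalar hU) /traceless -hA.
have [d12|d12] := eqVneq d1 d2.
  exists (f d1), 0; rewrite scale0r addr0 hB -(uconj_scalar hU (f d1)); congr (uconj U _).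
  apply/matrixP => i j; rewrite !mxE.
  by case: (ord2_cases i) => ->; case: (ord2_cases j) => -> //=; rewrite -/d2 d12.
have d12' : ofR d1 - ofR d2 != 0 by rewrite /ofR -rmorphB -/(ofR _) ofR_eq0 subr_eq0.
exists ((f d1 + f d2) / 2%:R), ((f d1 - f d2) / (ofR d1 - ofR d2)).
rewrite hQ hB -uconjZ -(uconj_scalar hU) -uconjD; congr (uconj U _).
apply/matrixP => i j; rewrite !mxE trA.
case: (ord2_cases i) => ->; case: (ord2_cases j) => -> /=; rewrite ?mulr1n ?mulr0n -/d1 -/d2.
- by field.
- by rewrite subrr mulr0 addr0.
- by rewrite subrr mulr0 addr0.
- by field.
Qed.

End TracelessPart.

Section AffineJumps.
Variable R : realType.
Local Notation C := R[i].
Local Notation ofR := (@ofR R).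

Lemma lindblad_term_affine (Q rho : 'M[C]_2) (al be : C) : Defs.hermitian Q ->
  let G := al%:M + be *: Q in
  G *m rho *m adjmx G - 2^-1 *: (adjmx G *m G *m rho + rho *m (adjmx G *m G))
  = (2^-1 * (be * Num.conj al - al * Num.conj be)) *: commmx Q rho
    - (2^-1 * (be * Num.conj be)) *: commmx Q (commmx Q rho).
Proof.
move=> hQ G.
have -> : adjmx G = (Num.conj al)%:M + Num.conj be *: Q.
  rewrite /G -{2}hQ; apply/matrixP => i j; rewrite !adjmxE !mxE.
  by case: (ord2_cases i) => ->; case: (ord2_cases j) => -> /=;
    rewrite ?mulr1n ?mulr0n ?rmorphD ?rmorphM ?rmorph0.
rewrite /G /commmx; apply/matrixP => i j; rewrite !(mxE, sum_ord2).
case: (ord2_cases i) => ->; case: (ord2_cases j) => -> /=; rewrite ?mulr1n ?mulr0n.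
all: by field.
Qed.

Lemma lindblad_affine (I : finType) (Ht : 'M[C]_2) (G : I -> 'M[C]_2) (al be : I -> C) rho :
  Defs.hermitian Ht -> (forall a, G a = (al a)%:M + be a *: traceless Ht) ->
  lindblad Ht G rho = - 'i%C *: commmx (traceless Ht) rho +
     \sum_a ((2^-1 * (be a * Num.conj (al a) - al a * Num.conj (be a))) *: commmx (traceless Ht) rho
    - (2^-1 * (be a * Num.conj (be a))) *: commmx (traceless Ht) (commmx (traceless Ht) rho)).
Proof.
move=> hH hG; rewrite /lindblad commmx_traceless; congr (_ + _).
apply: eq_bigr => a _; rewrite hG; exact: lindblad_term_affine (hermitian_traceless hH).
Qed.

Lemma lindblad_traceless0 (I : finType) (Ht : 'M[C]_2) (G : I -> 'M[C]_2) :
  Defs.hermitian Ht -> traceless Ht = 0 ->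
  (forall a, exists al be, G a = al%:M + be *: traceless Ht) ->
  forall rho, lindblad Ht G rho = 0.
Proof.
move=> hH hQ hG rho; rewrite /lindblad commmx_traceless hQ.
have comm0 (B : 'M[C]_2) : commmx 0 B = 0 by rewrite /commmx mul0mx mulmx0 subrr.
rewrite comm0 scaler0 add0r; apply: big1 => a _; have [al [be ->]] := hG a.
move: (lindblad_term_affine rho al be (hermitian_traceless hH)) => /= ->.
by rewrite hQ !comm0 !scaler0 subrr.
Qed.

End AffineJumps.

Section ReducedForm.
Variable R : realType.
Local Notation C := R[i].
Local Notation ofR := (@ofR R).

Definition trsq (A : 'M[C]_2) : C := \tr (traceless A *m traceless A).
Definition coefI (B : 'M[C]_2) : C := \tr B / 2%:R.
Definition coefQ (A B : 'M[C]_2) : C := \tr (B *m traceless A) / trsq A.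

Lemma affine_coefE (A B : 'M[C]_2) al be : trsq A != 0 ->
  B = al%:M + be *: traceless A -> B = (coefI B)%:M + coefQ A B *: traceless A.
Proof.
move=> hA hB.
have -> : coefI B = al.
  rewrite /coefI hB linearD /= linearZ /= mxtrace_traceless mulr0 addr0 mxtrace_scalar.
  by rewrite -[_ *+ 2]mulr_natr mulfK // pnatr_eq0.
have -> : coefQ A B = be.
  rewrite /coefQ hB mulmxDl mul_scalar_mx -scalemxAl linearD /= !linearZ /=.
  by rewrite mxtrace_traceless mulr0 add0r -/(trsq A) mulfK.
exact: hB.
Qed.

Definition kappa (I : finType) (A : 'M[C]_2) (G : I -> 'M[C]_2) : R :=
  \sum_a complex.Im (coefQ A (G a) * Num.conj (coefI (G a))).
Definition mu (I : finType) (A : 'M[C]_2) (G : I -> 'M[C]_2) : R :=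
  \sum_a (complex.Re (coefQ A (G a)) ^+ 2 + complex.Im (coefQ A (G a)) ^+ 2).
Definition hfactor (I : finType) (A : 'M[C]_2) (G : I -> 'M[C]_2) : R := 1 - kappa A G.

Lemma half_sub_conj (z w : C) :
  2^-1 * (z * Num.conj w - w * Num.conj z) = 'i%C * ofR (complex.Im (z * Num.conj w)).
Proof.
have -> : ofR (complex.Im (z * Num.conj w)) = (Num.conj (z * Num.conj w) - z * Num.conj w) / 2%:R * 'i%C.
  exact: ImJ_sub.
by rewrite rmorphM /= conjCK mulrCA -expr2 sqr_i; field.
Qed.

Lemma half_mul_conj (z : C) :
  2^-1 * (z * Num.conj z) = ofR ((complex.Re z ^+ 2 + complex.Im z ^+ 2) / 2%:R).
Proof.
have hz : ofR (complex.Re z ^+ 2 + complex.Im z ^+ 2) = z * Num.conj z.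
  by rewrite [LHS]add_Re2_Im2 sqr_normc.
by rewrite -hz /ofR rmorphM fmorphV rmorph_nat mulrC.
Qed.

Lemma lindblad_reduced (I : finType) (Ht : 'M[C]_2) (G : I -> 'M[C]_2) :
  Defs.hermitian Ht -> trsq Ht != 0 ->
  (forall a, exists al be, G a = al%:M + be *: traceless Ht) ->
  forall rho, lindblad Ht G rho =
    - ('i%C * ofR (hfactor Ht G)) *: commmx (traceless Ht) rho
    - ofR (mu Ht G / 2%:R) *: commmx (traceless Ht) (commmx (traceless Ht) rho).
Proof.
move=> hH hA hG rho.
have hG' a : G a = (coefI (G a))%:M + coefQ Ht (G a) *: traceless Ht.
  by have [al [be hGa]] := hG a; exact: affine_coefE hA hGa.
rewrite (lindblad_affine rho hH hG').
under eq_bigr => a _ do rewrite half_sub_conj half_mul_conj.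
rewrite sumrB -!scaler_suml -mulr_sumr /ofR -!rmorph_sum -mulr_suml.
rewrite -!/(ofR _) -/(kappa Ht G) -/(mu Ht G) addrA -scalerDl /hfactor /ofR rmorphB rmorph1.
by rewrite mulrBr mulr1 opprB [- 'i%C + _]addrC.
Qed.

End ReducedForm.

Section Spectrum.
Variable R : realType.
Local Notation C := R[i].
Local Notation ofR := (@ofR R).

Lemma traceless_spectrum (A U : 'M[C]_2) (d : 'rV[R]_2) :
  unitary U -> traceless A = uconj U (diag_mx (map_mx ofR d)) ->
  d 0 ord_max = - d 0 ord0 /\ trsq A = ofR (2%:R * d 0 ord0 ^+ 2).
Proof.
move=> hU hQ.
have hd : d 0 ord_max = - d 0 ord0.
  move: (mxtrace_traceless A); rewrite hQ mxtrace_uconj // mxtrace_diag sum_ord2 !mxE.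
  by rewrite /ofR -rmorphD -/(ofR _) => /eqP; rewrite ofR_eq0 addrC addr_eq0 => /eqP.
split => //; rewrite /trsq hQ -uconjM // mxtrace_uconj // mxtrace2 !(mxE, sum_ord2) /=.
rewrite hd /ofR rmorphM rmorphXn rmorphN rmorph_nat ?mulr1n ?mulr0n.
by set x := (d 0 ord0)%:C%C; ring.
Qed.

Lemma commmx2_diag (d : 'rV[R]_2) (rho : 'M[C]_2) : d 0 ord_max = - d 0 ord0 ->
  commmx (diag_mx (map_mx ofR d)) (commmx (diag_mx (map_mx ofR d)) rho) =
  ofR (4%:R * d 0 ord0 ^+ 2) *:
    (rho - (rho ord0 ord0 *: delta_mx ord0 ord0 + rho ord_max ord_max *: delta_mx ord_max ord_max)).
Proof.
move=> hd; rewrite /commmx; apply/matrixP => i j; rewrite !(mxE, sum_ord2).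
rewrite /ofR rmorphM rmorphXn rmorph_nat.
case: (ord2_cases i) => ->; case: (ord2_cases j) => -> /=; rewrite ?mulr1n ?mulr0n hd ?rmorphN.
all: by set x := (d 0 ord0)%:C%C; ring.
Qed.

(* The double commutator with a traceless self-adjoint [Q] of spectrum [{r, -r}]
   is [4 r^2] times the identity minus the rank-two projection onto the
   matrices that are diagonal in an eigenbasis of [Q]. *)
Lemma commmx2_uconj_diag (U : 'M[C]_2) (d : 'rV[R]_2) rho :
  unitary U -> d 0 ord_max = - d 0 ord0 ->
  commmx (uconj U (diag_mx (map_mx ofR d))) (commmx (uconj U (diag_mx (map_mx ofR d))) rho) =
  ofR (4%:R * d 0 ord0 ^+ 2) *:
    (rho - ((uconj (adjmx U) rho) ord0 ord0 *: uconj U (delta_mx ord0 ord0)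
          + (uconj (adjmx U) rho) ord_max ord_max *: uconj U (delta_mx ord_max ord_max))).
Proof.
move=> hU hd.
by rewrite -{1 2}(uconjVK hU rho) -!uconj_commmx // commmx2_diag // uconjZ uconjB uconjD !uconjZ uconjVK.
Qed.

Lemma nondegenerate_uconj_diag (U : 'M[C]_2) (d : 'rV[C]_2) :
  unitary U -> d 0 ord0 != d 0 ord_max -> Defs.nondegenerate (uconj U (diag_mx d)).
Proof.
move=> hU hd a; rewrite /eigenvalue /eigenspace mxrank_ker.
have -> : uconj U (diag_mx d) - a%:M = uconj U (diag_mx d - a%:M) by rewrite uconjB uconj_scalar.
rewrite mxrank_uconj //.
have : diag_mx d - a%:M != 0.
  apply: contra hd => /eqP /matrixP h.
  move: (h ord0 ord0) (h ord_max ord_max); rewrite !mxE !eqxx !mulr1n.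
  by move=> /eqP; rewrite subr_eq0 => /eqP -> /eqP; rewrite subr_eq0 eq_sym.
rewrite -mxrank_eq0 -mxrank_eq0 mxrank_ker mxrank_uconj //.
by have := rank_leq_row (diag_mx d - a%:M); case: (\rank _) => [|[|[|]]].
Qed.

End Spectrum.

Section MinimalDegeneracy.
Variable R : realType.
Local Notation C := R[i].

Lemma rank_supermx_shift n k (L : 'M[C]_n -> 'M[C]_n) (lam : C)
    (u : 'I_k -> 'M[C]_n -> C) (P : 'I_k -> 'M[C]_n) :
  (forall rho, L rho = lam *: rho + \sum_(l < k) u l rho *: P l) ->
  (\rank (supermx L - lam%:M)%R <= k)%N.
Proof.
move=> hL.
have -> : supermx L - lam%:M =
    (\matrix_(i, l) u l (vec_mx (delta_mx 0 i))) *m (\matrix_(l, j) mxvec (P l) 0 j).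
  apply/matrixP => i j; rewrite /supermx /lin_mx !mxE /= hL linearD /= linearZ /=.
  rewrite vec_mxK !mxE raddf_sum /= summxE eq_sym mulr_natr addrAC subrr add0r.
  by apply: eq_bigr => l _; rewrite linearZ !mxE.
exact: leq_trans (mxrankM_maxl _ _) (rank_leq_col _).
Qed.

Lemma min_degenerate_nonzero (L : 'M[C]_2 -> 'M[C]_2) :
  min_degenerate L -> ~ (forall rho, L rho = 0).
Proof.
case=> hker _ hL.
have := @rank_supermx_shift _ 0 L 0 (fun _ _ => 0) (fun _ => 0).
rewrite [(0 : C)%:M]raddf0 subr0 leqn0 mxrank_eq0 => /(_ _)/eqP hL0.
move: hker; rewrite mxrank_ker hL0 ?mxrank0 //.
by move=> rho; rewrite hL big_ord0 scale0r addr0.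
Qed.

Lemma min_degenerate_no_double_eigenvalue (L : 'M[C]_2 -> 'M[C]_2) (lam : C)
    (u : 'I_2 -> 'M[C]_2 -> C) (P : 'I_2 -> 'M[C]_2) :
  min_degenerate L -> lam != 0 ->
  ~ (forall rho, L rho = lam *: rho + \sum_(l < 2) u l rho *: P l).
Proof.
case=> _ hsimple hlam hL.
have hrank := rank_supermx_shift hL.
have hdim : (2 <= \rank (eigenspace (supermx L) lam))%N.
  by rewrite /eigenspace mxrank_ker; move: hrank; case: (\rank _) => [|[|[|]]].
have hev : eigenvalue (supermx L) lam.
  by rewrite /eigenvalue -mxrank_eq0 -lt0n (leq_trans _ hdim).
by move: (hsimple lam hlam hev) hdim => ->.
Qed.

End MinimalDegeneracy.

Section NormalForm.
Variable R : realType.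
Local Notation C := R[i].
Local Notation ofR := (@ofR R).

Definition normal_hamiltonian (I : finType) (Ht : 'M[C]_2) (G : I -> 'M[C]_2) : 'M[C]_2 :=
  ofR (hfactor Ht G) *: traceless Ht.

(* As [Re (trsq Ht) = 2 r^2], this is [mu |r| / |c|]. *)
Definition normal_rate (I : finType) (Ht : 'M[C]_2) (G : I -> 'M[C]_2) : R :=
  mu Ht G * Num.sqrt (2%:R * complex.Re (trsq Ht) / hfactor Ht G ^+ 2) / 2%:R.

Lemma commmxZl n (A B : 'M[C]_n) a : commmx (a *: A) B = a *: commmx A B.
Proof. by rewrite /commmx -scalemxAl -scalemxAr scalerBr. Qed.

Lemma commmxZr n (A B : 'M[C]_n) a : commmx A (a *: B) = a *: commmx A B.
Proof. by rewrite /commmx -scalemxAl -scalemxAr scalerBr. Qed.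

Lemma sgnsqrtN (x : R) : sgnsqrt (- x) = - sgnsqrt x.
Proof. by rewrite /sgnsqrt sgrN normrN mulNr. Qed.

Lemma sgnsqrt_sqr (x : R) : sgnsqrt x ^+ 2 = `|x|.
Proof.
rewrite /sgnsqrt exprMn sqr_sg sqr_sqrtr ?normr_ge0 //.
by have [->|_] := eqVneq x 0; rewrite ?normr0 ?mulr0 ?mul1r.
Qed.

Lemma normal_rate_sgnsqrt (m c r : R) : c != 0 -> r != 0 ->
  m * Num.sqrt (2%:R * (2%:R * r ^+ 2) / c ^+ 2) / 2%:R / 2%:R * (sgnsqrt (c * r) / r) ^+ 2
  = m / 2%:R.
Proof.
move=> c0 r0.
have -> : 2%:R * (2%:R * r ^+ 2) / c ^+ 2 = (2%:R * r / c) ^+ 2 by field.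
rewrite sqrtr_sqr exprMn exprVn sgnsqrt_sqr !normrM normrV ?unitfE // normr_nat.
rewrite -(real_normK (num_real r)).
have r0' : `|r| != 0 by rewrite normr_eq0.
have c0' : `|c| != 0 by rewrite normr_eq0.
by field; rewrite r0' c0'.
Qed.

Section MinimallyDegenerate.
Variables (I : finType) (Ht : 'M[C]_2) (G : I -> 'M[C]_2).
Hypotheses (hdeph : dephasing Ht G) (hmin : min_degenerate (lindblad Ht G)).
Variables (U : 'M[C]_2) (d : 'rV[R]_2).
Hypotheses (hU : unitary U) (hQ : traceless Ht = uconj U (diag_mx (map_mx ofR d))).

Local Notation r := (d 0 ord0).
Local Notation c := (hfactor Ht G).

Lemma dephasing_affine a : exists al be, G a = al%:M + be *: traceless Ht.
Proof. by have [f /fcalc_affine] := proj2 hdeph a. Qed.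

Lemma traceless_eigen_neq0 : r != 0.
Proof.
have [hd _] := traceless_spectrum hU hQ.
apply/negP => /eqP r0; apply: (min_degenerate_nonzero hmin).
apply: lindblad_traceless0 (proj1 hdeph) _ dephasing_affine.
rewrite hQ; have -> : diag_mx (map_mx ofR d) = 0.
  apply/matrixP => i j; rewrite !mxE.
  by case: (ord2_cases i) => ->; case: (ord2_cases j) => -> /=;
    rewrite ?hd r0 ?oppr0 ?mulr0n ?mulr1n /ofR ?rmorph0.
by rewrite /uconj mulmx0 mul0mx.
Qed.

Lemma trsq_neq0 : trsq Ht != 0.
Proof.
have [_ ->] := traceless_spectrum hU hQ.
by rewrite ofR_eq0 mulf_neq0 ?pnatr_eq0 ?expf_neq0 ?traceless_eigen_neq0.
Qed.

Lemma lindblad_hfactor_form rho : lindblad Ht G rho =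
  - ('i%C * ofR c) *: commmx (traceless Ht) rho
  - ofR (mu Ht G / 2%:R) *: commmx (traceless Ht) (commmx (traceless Ht) rho).
Proof. exact: lindblad_reduced (proj1 hdeph) trsq_neq0 dephasing_affine rho. Qed.

(* For [c = 0] the Lindbladian is a multiple of the double commutator, which
   is zero or has the eigenvalue [- 2 mu r^2] on a two-dimensional space. *)
Lemma hfactor_neq0 : c != 0.
Proof.
have [hd _] := traceless_spectrum hU hQ.
have hL := lindblad_hfactor_form.
apply/negP => /eqP c0; have [mu0|mu0] := eqVneq (mu Ht G) 0.
  apply: (min_degenerate_nonzero hmin) => rho.
  by rewrite hL c0 mu0 mul0r /ofR rmorph0 mulr0 oppr0 !scale0r subrr.
pose k := ofR (2%:R * mu Ht G * r ^+ 2).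
apply: (min_degenerate_no_double_eigenvalue (lam := - k)
  (u := fun l rho => k * uconj (adjmx U) rho l l) (P := fun l => uconj U (delta_mx l l)) hmin).
  by rewrite oppr_eq0 ofR_eq0 !mulf_neq0 ?pnatr_eq0 ?expf_neq0 ?traceless_eigen_neq0.
move=> rho; rewrite hL c0 /ofR rmorph0 mulr0 oppr0 scale0r sub0r hQ (commmx2_uconj_diag rho hU hd).
rewrite sum_ord2 scalerA -rmorphM -/(ofR _).
have -> : mu Ht G / 2%:R * (4%:R * r ^+ 2) = 2%:R * mu Ht G * r ^+ 2 by field.
by rewrite -/k scalerBr scalerDr !scalerA opprB scaleNr [LHS]addrC.
Qed.

Lemma normal_hamiltonian_uconj :
  normal_hamiltonian Ht G = uconj U (diag_mx (map_mx ofR (c *: d))).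
Proof.
rewrite /normal_hamiltonian hQ -uconjZ; congr (uconj U _); apply/matrixP => i j.
by rewrite !mxE /ofR rmorphM mulrnAr.
Qed.

Lemma sgnsqrt_normal_hamiltonian :
  uconj U (diag_mx (\row_j ofR (sgnsqrt ((c *: d) 0 j)))) =
  ofR (sgnsqrt (c * r) / r) *: traceless Ht.
Proof.
have [hd _] := traceless_spectrum hU hQ.
have r0 := traceless_eigen_neq0.
rewrite hQ -uconjZ; congr (uconj U _); apply/matrixP => i j; rewrite !mxE.
case: (ord2_cases i) => ->; case: (ord2_cases j) => -> /=; rewrite ?mulr0n ?mulr1n ?mulr0 //.
- by rewrite /ofR -rmorphM divfK.
- by rewrite hd mulrN sgnsqrtN /ofR -rmorphM mulrN divfK.
Qed.

Lemma min_degenerate_normal_form_spectral :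
  dephasing_normal_form (lindblad Ht G) (normal_hamiltonian Ht G) (normal_rate Ht G).
Proof.
have [hd htrsq] := traceless_spectrum hU hQ.
have [r0 c0] := (traceless_eigen_neq0, hfactor_neq0).
split.
- rewrite /Defs.hermitian /normal_hamiltonian adjmxZ_ofR; congr (_ *: _).
  exact: hermitian_traceless (proj1 hdeph).
- rewrite normal_hamiltonian_uconj; apply: nondegenerate_uconj_diag => //.
  rewrite !mxE hd (inj_eq (@ofR_inj R)) mulrN -subr_eq0 opprK -mulr2n mulrn_eq0 /=.
  exact: mulf_neq0.
- by rewrite /normal_hamiltonian linearZ /= mxtrace_traceless mulr0.
- rewrite /normal_rate divr_ge0 ?ler0n // mulr_ge0 ?sqrtr_ge0 // sumr_ge0 // => a _.
  by rewrite addr_ge0 ?sqr_ge0.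
exists (uconj U (diag_mx (\row_j ofR (sgnsqrt ((c *: d) 0 j))))); split.
  by exists U, (c *: d); split; [exact: hU | exact: normal_hamiltonian_uconj |].
move=> rho; rewrite lindblad_hfactor_form sgnsqrt_normal_hamiltonian /normal_hamiltonian.
rewrite !commmxZl !commmxZr !scalerA scalerN /normal_rate htrsq.
rewrite scalerA /ofR -!rmorphM /= -expr2 normal_rate_sgnsqrt //.
by rewrite mulNr.
Qed.

End MinimallyDegenerate.

Lemma min_degenerate_normal_form (I : finType) (Ht : 'M[C]_2) (G : I -> 'M[C]_2) :
  dephasing Ht G -> min_degenerate (lindblad Ht G) ->
  [/\ trsq Ht = ofR (complex.Re (trsq Ht)), 0 < complex.Re (trsq Ht), hfactor Ht G != 0 &
      dephasing_normal_form (lindblad Ht G) (normal_hamiltonian Ht G) (normal_rate Ht G)].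
Proof.
move=> hdeph hmin.
have [U [d [hU hQ]]] := hermitian_spectral (hermitian_traceless (proj1 hdeph)).
have [_ htrsq] := traceless_spectrum hU hQ.
have r0 := traceless_eigen_neq0 hdeph hmin hU hQ.
split.
- by rewrite htrsq.
- by rewrite htrsq /= mulr_gt0 ?ltr0n // lt_def expf_neq0 // sqr_ge0.
- exact: (hfactor_neq0 hdeph hmin hU hQ).
- exact: (min_degenerate_normal_form_spectral hdeph hmin hU hQ).
Qed.

End NormalForm.

Section SmoothReal.
Variable R : realType.

(* [smoothR] is not an inductive notion, so its closure properties are proved
   order by order, for all derivatives up to [k] at once. *)
Definition derivable_upto (k : nat) (f : R -> R) :=
  forall j, (j <= k)%N -> forall x, derivable (derive1n j f) x 1.

Lemma smoothR_upto (f : R -> R) : smoothR f <-> forall k, derivable_upto k f.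
Proof.
split=> h n; first by move=> j _ x; exact: h.
by move=> x; exact: (h n n (leqnn n) x).
Qed.

Lemma derivable_upto0 (f : R -> R) : derivable_upto 0 f <-> forall x, derivable f x 1.
Proof. by split=> [h|h [|//]]; [exact: h 0%N (leqnn 0) | move=> _; exact: h]. Qed.

Lemma derivable_uptoS k (f : R -> R) :
  derivable_upto k.+1 f <-> (forall x, derivable f x 1) /\ derivable_upto k (derive1 f).
Proof.
split=> [h|[h0 h] [|j] hj]; last by rewrite derive1Sn; exact: h.
  by split=> [|j hj]; [exact: h 0%N isT | rewrite -derive1Sn; exact: h j.+1 hj].
exact: h0.
Qed.

Lemma derivable_uptoW k (f : R -> R) : derivable_upto k.+1 f -> derivable_upto k f.
Proof. by move=> h j hj; apply: h; rewrite (leq_trans hj). Qed.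

Lemma derivable_upto_cst k (a : R) : derivable_upto k (fun _ => a).
Proof.
elim: k a => [|k IH] a; first by apply/derivable_upto0 => x; exact: derivable_cst.
apply/derivable_uptoS; split=> [x|]; first exact: derivable_cst.
have -> : derive1 (fun _ : R => a) = (fun _ => 0) by apply/funext => x; rewrite derive1_cst.
exact: IH.
Qed.

Lemma derivable_uptoD k (f g : R -> R) :
  derivable_upto k f -> derivable_upto k g -> derivable_upto k (fun x => f x + g x).
Proof.
elim: k f g => [|k IH] f g.
  by move=> /derivable_upto0 hf /derivable_upto0 hg; apply/derivable_upto0 => x; exact: derivableD.
move=> /derivable_uptoS [hf0 hf] /derivable_uptoS [hg0 hg].
apply/derivable_uptoS; split=> [x|]; first exact: derivableD.
have -> : derive1 (fun x => f x + g x) = (fun x => derive1 f x + derive1 g x).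
  by apply/funext => x; rewrite !derive1E deriveD.
exact: IH.
Qed.

Lemma derivable_uptoN k (f : R -> R) : derivable_upto k f -> derivable_upto k (fun x => - f x).
Proof.
elim: k f => [|k IH] f.
  by move=> /derivable_upto0 hf; apply/derivable_upto0 => x; exact: derivableN.
move=> /derivable_uptoS [hf0 hf]; apply/derivable_uptoS; split=> [x|]; first exact: derivableN.
have -> : derive1 (fun x => - f x) = (fun x => - derive1 f x).
  by apply/funext => x; rewrite !derive1E deriveN.
exact: IH.
Qed.

Lemma derivable_uptoM k (f g : R -> R) :
  derivable_upto k f -> derivable_upto k g -> derivable_upto k (fun x => f x * g x).
Proof.
elim: k f g => [|k IH] f g.
  by move=> /derivable_upto0 hf /derivable_upto0 hg; apply/derivable_upto0 => x; exact: derivableM.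
move=> hfS hgS; have [hf0 hf] := iffLR (derivable_uptoS _ _) hfS.
have [hg0 hg] := iffLR (derivable_uptoS _ _) hgS.
apply/derivable_uptoS; split=> [x|]; first exact: derivableM.
have -> : derive1 (fun x => f x * g x) = (fun x => derive1 f x * g x + f x * derive1 g x).
  apply/funext => x; rewrite !derive1E (deriveM (hf0 x) (hg0 x)) /= addrC.
  by congr (_ + _); apply: mulrC.
apply: derivable_uptoD; first exact: IH hf (derivable_uptoW hgS).
exact: IH (derivable_uptoW hfS) hg.
Qed.

Lemma derivable_uptoV k (f : R -> R) : derivable_upto k f -> (forall x, f x != 0) ->
  derivable_upto k (fun x => (f x)^-1).
Proof.
elim: k f => [|k IH] f.
  by move=> /derivable_upto0 hf f0; apply/derivable_upto0 => x; exact: derivableV.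
move=> hfS f0; have [hf0 hf] := iffLR (derivable_uptoS _ _) hfS.
apply/derivable_uptoS; split=> [x|]; first exact: derivableV.
have -> : derive1 (fun x => (f x)^-1) = (fun x => - (derive1 f x * ((f x)^-1 * (f x)^-1))).
  apply/funext => x; rewrite !derive1E (deriveV (f0 x) (hf0 x)).
  by rewrite expr2 invfM -[_ *: _]/(_ * _) mulNr mulrC.
have hV := IH f (derivable_uptoW hfS) f0.
exact/derivable_uptoN/derivable_uptoM/derivable_uptoM.
Qed.

Lemma derivable_upto_sqrt k (f : R -> R) : derivable_upto k f -> (forall x, 0 < f x) ->
  derivable_upto k (fun x => Num.sqrt (f x)).
Proof.
have is_derive_sqrt (g : R -> R) x : derivable g x 1 -> 0 < g x ->
    is_derive x 1 (fun y => Num.sqrt (g y)) ('D_1 g x * (2 * Num.sqrt (g x))^-1).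
  move=> hg gx; have := is_derive1_comp (is_derive1_sqrt gx) (derivableP hg).
  by rewrite mulrC.
elim: k f => [|k IH] f.
  move=> /derivable_upto0 hf f0; apply/derivable_upto0 => x.
  by have [] := is_derive_sqrt f x (hf x) (f0 x).
move=> hfS f0; have [hf0 hf] := iffLR (derivable_uptoS _ _) hfS.
apply/derivable_uptoS; split=> [x|].
  by have [] := is_derive_sqrt f x (hf0 x) (f0 x).
have -> : derive1 (fun x => Num.sqrt (f x)) = (fun x => derive1 f x * (2 * Num.sqrt (f x))^-1).
  apply/funext => x; rewrite !derive1E.
  have hd := is_derive_sqrt f x (hf0 x) (f0 x).
  by rewrite derive_val.
have h2s : derivable_upto k (fun x => 2 * Num.sqrt (f x)).
  exact: (derivable_uptoM (f := fun _ => 2) (@derivable_upto_cst k 2) (IH f (derivable_uptoW hfS) f0)).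
apply: derivable_uptoM hf (derivable_uptoV h2s _) => x.
by rewrite mulf_neq0 ?pnatr_eq0 // gt_eqF // sqrtr_gt0.
Qed.

Lemma eq_smoothR (f g : R -> R) : f =1 g -> smoothR f -> smoothR g.
Proof. by move=> /funext ->. Qed.

Lemma smoothR_cst (a : R) : smoothR (fun _ => a).
Proof. by apply/smoothR_upto => k; exact: derivable_upto_cst. Qed.

Lemma smoothRD (f g : R -> R) : smoothR f -> smoothR g -> smoothR (fun x => f x + g x).
Proof. by move=> /smoothR_upto hf /smoothR_upto hg; apply/smoothR_upto => k; exact: derivable_uptoD. Qed.

Lemma smoothRN (f : R -> R) : smoothR f -> smoothR (fun x => - f x).
Proof. by move=> /smoothR_upto hf; apply/smoothR_upto => k; exact: derivable_uptoN. Qed.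

Lemma smoothRB (f g : R -> R) : smoothR f -> smoothR g -> smoothR (fun x => f x - g x).
Proof. by move=> hf hg; exact: smoothRD hf (smoothRN hg). Qed.

Lemma smoothRM (f g : R -> R) : smoothR f -> smoothR g -> smoothR (fun x => f x * g x).
Proof. by move=> /smoothR_upto hf /smoothR_upto hg; apply/smoothR_upto => k; exact: derivable_uptoM. Qed.

Lemma smoothRV (f : R -> R) : smoothR f -> (forall x, f x != 0) -> smoothR (fun x => (f x)^-1).
Proof. by move=> /smoothR_upto hf f0; apply/smoothR_upto => k; exact: derivable_uptoV. Qed.

Lemma smoothR_sqrt (f : R -> R) : smoothR f -> (forall x, 0 < f x) ->
  smoothR (fun x => Num.sqrt (f x)).
Proof. by move=> /smoothR_upto hf f0; apply/smoothR_upto => k; exact: derivable_upto_sqrt. Qed.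

Lemma smoothR_sum (I : finType) (F : I -> R -> R) :
  (forall a, smoothR (F a)) -> smoothR (fun s => \sum_a F a s).
Proof.
move=> hF; rewrite unlock; elim: (index_enum I) => [|a r IH] /=; first exact: smoothR_cst.
exact: smoothRD.
Qed.

End SmoothReal.

Arguments smoothR_cst {R} a.

Section SmoothMatrix.
Variable R : realType.
Local Notation C := R[i].
Local Notation ofR := (@ofR R).

Definition smoothC (h : R -> C) : Prop :=
  smoothR (fun s => complex.Re (h s)) /\ smoothR (fun s => complex.Im (h s)).

Lemma eq_smoothC (h k : R -> C) : h =1 k -> smoothC h -> smoothC k.
Proof. by move=> /funext ->. Qed.

Lemma smoothC_cst (z : C) : smoothC (fun _ => z).
Proof. by split; apply: smoothR_cst. Qed.

Lemma smoothC_ofR (f : R -> R) : smoothR f -> smoothC (fun s => ofR (f s)).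
Proof. by split; last exact: smoothR_cst. Qed.

Lemma smoothCD (h k : R -> C) : smoothC h -> smoothC k -> smoothC (fun s => h s + k s).
Proof.
case=> hRe hIm [kRe kIm]; split.
  by apply: eq_smoothR (smoothRD hRe kRe) => s; case: (h s); case: (k s).
by apply: eq_smoothR (smoothRD hIm kIm) => s; case: (h s); case: (k s).
Qed.

Lemma smoothCN (h : R -> C) : smoothC h -> smoothC (fun s => - h s).
Proof.
case=> hRe hIm; split; first by apply: eq_smoothR (smoothRN hRe) => s; case: (h s).
by apply: eq_smoothR (smoothRN hIm) => s; case: (h s).
Qed.

Lemma smoothCM (h k : R -> C) : smoothC h -> smoothC k -> smoothC (fun s => h s * k s).
Proof.
case=> hRe hIm [kRe kIm]; split.
  apply: eq_smoothR (smoothRB (smoothRM hRe kRe) (smoothRM hIm kIm)) => s.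
  by case: (h s); case: (k s).
apply: eq_smoothR (smoothRD (smoothRM hRe kIm) (smoothRM hIm kRe)) => s.
by case: (h s); case: (k s).
Qed.

Lemma smoothC_conj (h : R -> C) : smoothC h -> smoothC (fun s => Num.conj (h s)).
Proof.
case=> hRe hIm; split; first by apply: eq_smoothR hRe => s; case: (h s).
by apply: eq_smoothR (smoothRN hIm) => s; case: (h s).
Qed.

Lemma smoothC_sum (I : finType) (F : I -> R -> C) :
  (forall a, smoothC (F a)) -> smoothC (fun s => \sum_a F a s).
Proof.
move=> hF; rewrite unlock; elim: (index_enum I) => [|a r IH] /=; first exact: smoothC_cst.
exact: smoothCD.
Qed.

Lemma smoothMB m n (A B : R -> 'M[C]_(m, n)) :
  smoothM A -> smoothM B -> smoothM (fun s => A s - B s).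
Proof.
move=> hA hB i j; apply: eq_smoothC (smoothCD (hA i j) (smoothCN (hB i j))) => s.
by rewrite !mxE.
Qed.

Lemma smoothMZ m n (a : R -> C) (A : R -> 'M[C]_(m, n)) :
  smoothC a -> smoothM A -> smoothM (fun s => a s *: A s).
Proof. by move=> ha hA i j; apply: eq_smoothC (smoothCM ha (hA i j)) => s; rewrite mxE. Qed.

Lemma smoothM_mul m n p (A : R -> 'M[C]_(m, n)) (B : R -> 'M[C]_(n, p)) :
  smoothM A -> smoothM B -> smoothM (fun s => A s *m B s).
Proof.
move=> hA hB i j; apply: eq_smoothC (smoothC_sum (fun k => smoothCM (hA i k) (hB k j))) => s.
by rewrite mxE.
Qed.

Lemma smoothM_scalar n (a : R -> C) : smoothC a -> smoothM (fun s => (a s)%:M : 'M[C]_n).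
Proof.
move=> ha i j; have [<-|ij] := eqVneq i j.
  by apply: eq_smoothC ha => s; rewrite mxE eqxx mulr1n.
by apply: eq_smoothC (smoothC_cst 0) => s; rewrite mxE (negPf ij) mulr0n.
Qed.

Lemma smoothC_mxtrace n (A : R -> 'M[C]_n) : smoothM A -> smoothC (fun s => \tr (A s)).
Proof. by move=> hA; exact: smoothC_sum (fun i => hA i i). Qed.

End SmoothMatrix.

Arguments smoothC_cst {R} z.

Section SmoothNormalForm.
Variable R : realType.
Local Notation C := R[i].
Local Notation ofR := (@ofR R).

Variables (I : finType) (Ht : R -> 'M[C]_2) (G : R -> I -> 'M[C]_2).
Hypotheses (hHt : smoothM Ht) (hG : forall a, smoothM (fun s => G s a)).
Hypothesis hmin : forall s, dephasing (Ht s) (G s) /\ min_degenerate (lindblad (Ht s) (G s)).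

Let hnf s := min_degenerate_normal_form (proj1 (hmin s)) (proj2 (hmin s)).

Lemma smooth_traceless : smoothM (fun s => traceless (Ht s)).
Proof.
apply: smoothMB hHt (smoothM_scalar _).
exact: smoothCM (smoothC_mxtrace hHt) (smoothC_cst _).
Qed.

Lemma smooth_trsq : smoothR (fun s => complex.Re (trsq (Ht s))).
Proof. exact: (smoothC_mxtrace (smoothM_mul smooth_traceless smooth_traceless)).1. Qed.

Lemma smooth_coefQ a : smoothC (fun s => coefQ (Ht s) (G s a)).
Proof.
have htrsqV : smoothR (fun s => (complex.Re (trsq (Ht s)))^-1).
  by apply: smoothRV smooth_trsq _ => s; case: (hnf s) => _ /gt_eqF ->.
apply: eq_smoothC (smoothCM (smoothC_mxtrace (smoothM_mul (hG a) smooth_traceless))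
                            (smoothC_ofR htrsqV)) => s.
by case: (hnf s) => htrsq _ _ _; rewrite /coefQ [in RHS]htrsq /ofR fmorphV.
Qed.

Lemma smooth_hfactor : smoothR (fun s => hfactor (Ht s) (G s)).
Proof.
have hIm a : smoothR (fun s => complex.Im (coefQ (Ht s) (G s a) * Num.conj (coefI (G s a)))).
  have hcoefI : smoothC (fun s => coefI (G s a)).
    exact: smoothCM (smoothC_mxtrace (hG a)) (smoothC_cst _).
  exact: (smoothCM (smooth_coefQ a) (smoothC_conj hcoefI)).2.
exact: smoothRB (smoothR_cst 1) (smoothR_sum hIm).
Qed.

Lemma smooth_mu : smoothR (fun s => mu (Ht s) (G s)).
Proof.
have hsq a : smoothR (fun s =>
    complex.Re (coefQ (Ht s) (G s a)) ^+ 2 + complex.Im (coefQ (Ht s) (G s a)) ^+ 2).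
  have [hRe hIm] := smooth_coefQ a.
  exact: smoothRD (smoothRM hRe hRe) (smoothRM hIm hIm).
exact: smoothR_sum hsq.
Qed.

Lemma smooth_normal_hamiltonian : smoothM (fun s => normal_hamiltonian (Ht s) (G s)).
Proof. exact: smoothMZ (smoothC_ofR smooth_hfactor) smooth_traceless. Qed.

Lemma smooth_normal_rate : smoothR (fun s => normal_rate (Ht s) (G s)).
Proof.
have hc2 := smoothRM smooth_hfactor smooth_hfactor.
have hc2V : smoothR (fun s => (hfactor (Ht s) (G s) ^+ 2)^-1).
  by apply: smoothRV hc2 _ => s; case: (hnf s) => _ _ c0 _; rewrite mulf_neq0.
apply: smoothRM (smoothRM smooth_mu (smoothR_sqrt _ _)) (smoothR_cst _).
  exact: smoothRM (smoothRM (smoothR_cst 2) smooth_trsq) hc2V.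
move=> s; case: (hnf s) => _ trsq_gt0 c0 _.
by rewrite !mulr_gt0 ?ltr0n ?invr_gt0 ?exprn_even_gt0 //= lt0r sqr_ge0 expf_neq0.
Qed.

End SmoothNormalForm.

Theorem lemma3p1 (R : realType) :
  (forall (I : finType) (Ht : 'M[R[i]]_2) (G : I -> 'M[R[i]]_2),
      dephasing Ht G -> min_degenerate (lindblad Ht G) ->
      exists (H : 'M[R[i]]_2) (gamma : R),
        dephasing_normal_form (lindblad Ht G) H gamma)
  /\
  (forall (I : finType) (Ht : R -> 'M[R[i]]_2) (G : R -> I -> 'M[R[i]]_2),
      smoothM Ht -> (forall a : I, smoothM (fun s => G s a)) ->
      (forall s : R, dephasing (Ht s) (G s) /\ min_degenerate (lindblad (Ht s) (G s))) ->
      exists (H : R -> 'M[R[i]]_2) (gamma : R -> R),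
        smoothM H /\ smoothR gamma /\
        forall s : R, dephasing_normal_form (lindblad (Ht s) (G s)) (H s) (gamma s)).
Proof.
split=> [I Ht G hdeph hmin | I Ht G hHt hG hmin].
  exists (normal_hamiltonian Ht G), (normal_rate Ht G).
  by case: (min_degenerate_normal_form hdeph hmin).
exists (fun s => normal_hamiltonian (Ht s) (G s)), (fun s => normal_rate (Ht s) (G s)).
split; first exact: smooth_normal_hamiltonian hHt hG hmin.
split; first exact: smooth_normal_rate hHt hG hmin.
by move=> s; case: (min_degenerate_normal_form (proj1 (hmin s)) (proj2 (hmin s))).
Qed.
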